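(* Suppose there exist $r_0>0$ and $C>0$ with $C<\mu/(\epsilon^2\lambda)$ such that $|\nabla\ln T(\mathbf{x})|<C$ for all $|\mathbf{x}|>r_0$, and put $\tilde C=(\mu-\epsilon^2\lambda C)/(\epsilon^2\lambda)>0$. Then there exists $r_1>r_0$ such that $$\mathcal{G}_{\mathbf u}|\mathbf{x}|\le-\frac{\epsilon^2\tilde C}{2}<0\qquad\text{for all }\mathbf{x}\in\mathbb{R}^3\setminus N\text{ with }|\mathbf{x}|>r_1.$$
   Context: Standing setting: fix $\mu>0$, $\lambda>0$, $e\in(0,1)$, $\epsilon\in(0,1]$. For $\mathbf{x}=(x,y,z)\in\mathbb{R}^3$ let $\nu(\mathbf{x})=\frac{\mu}{\lambda^2}\big(|\mathbf{x}|-\frac{x}{e}-\frac{\mathrm{i}y\sqrt{1-e^2}}{e}\big)$, $\sqrt{\cdot}$ the principal branch of the complex square root, $N=\{0\}\cup\{\mathbf{x}:y=0,\ \nu(\mathbf{x})\in[0,4]\}$ (Lebesgue-null), and on $\mathbb{R}^3\setminus N$ $$R_\epsilon(\mathbf{x})=\frac{\lambda}{\epsilon^2}\Big[\ln|\nu|+2\ln\big|1+\sqrt{1-4/\nu}\big|-\frac{\mu|\mathbf{x}|}{\lambda^2}+\tfrac12\operatorname{Re}\big(\nu(1-\sqrt{1-4/\nu})\big)\Big].$$ Let $T\in C^2(\mathbb{R}^3;(0,\infty))$ with $\ln T$ bounded. Set $\rho_\epsilon=T\exp(2R_\epsilon)$, the osmotic velocity $\mathbf{u}=\frac{\epsilon^2}{2}\nabla\ln\rho_\epsilon$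 and $\mathcal{G}_{\mathbf u}=\frac{\epsilon^2}{2}\Delta+\mathbf{u}\cdot\nabla$. *)

From Stdlib Require Import Reals Lra.
Open Scope R_scope.

Definition R3 : Type := (R * R * R)%type.
Definition px (p : R3) : R := fst (fst p).
Definition py (p : R3) : R := snd (fst p).
Definition pz (p : R3) : R := snd p.

Definition vnorm (p : R3) : R := sqrt (px p ^ 2 + py p ^ 2 + pz p ^ 2).

(* x + t e_i  (i = 0,1,2; other indices leave x unchanged) *)
Definition upd (p : R3) (i : nat) (t : R) : R3 :=
  match i with
  | 0%nat => (px p + t, py p, pz p)
  | 1%nat => (px p, py p + t, pz p)
  | 2%nat => (px p, py p, pz p + t)
  | _ => p
  end.

Definition vsub (p q : R3) : R3 := (px p - px q, py p - py q, pz p - pz q).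

Definition is_partial (f : R3 -> R) (x : R3) (i : nat) (l : R) : Prop :=
  derivable_pt_lim (fun t => f (upd x i t)) 0 l.

Definition is_grad (f : R3 -> R) (x : R3) (g : R3) : Prop :=
  is_partial f x 0 (px g) /\ is_partial f x 1 (py g) /\ is_partial f x 2 (pz g).

Definition is_second_partial (f : R3 -> R) (x : R3) (i : nat) (l : R) : Prop :=
  exists delta, 0 < delta /\ exists f' : R -> R,
    (forall t, Rabs t < delta -> derivable_pt_lim (fun s => f (upd x i s)) t (f' t))
    /\ derivable_pt_lim f' 0 l.

Definition is_laplacian (f : R3 -> R) (x : R3) (l : R) : Prop :=
  exists a b c, is_second_partial f x 0 a /\ is_second_partial f x 1 b /\
    is_second_partial f x 2 c /\ l = a + b + c.

Definition cont3 (f : R3 -> R) : Prop :=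
  forall x eps, 0 < eps -> exists delta, 0 < delta /\
    forall y, vnorm (vsub y x) < delta -> Rabs (f y - f x) < eps.

Definition C2_3 (f : R3 -> R) : Prop :=
  exists (D : nat -> R3 -> R) (D2 : nat -> nat -> R3 -> R),
    cont3 f /\
    (forall i, (i < 3)%nat -> cont3 (D i) /\
       forall x, is_partial f x i (D i x)) /\
    (forall i j, (i < 3)%nat -> (j < 3)%nat -> cont3 (D2 i j) /\
       forall x, is_partial (D i) x j (D2 i j x)).

Definition Cx : Type := (R * R)%type.
Definition cre (z : Cx) : R := fst z.
Definition cim (z : Cx) : R := snd z.
Definition cadd (z w : Cx) : Cx := (cre z + cre w, cim z + cim w).
Definition csub (z w : Cx) : Cx := (cre z - cre w, cim z - cim w).
Definition cmul (z w : Cx) : Cx :=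
  (cre z * cre w - cim z * cim w, cre z * cim w + cim z * cre w).
Definition cmod (z : Cx) : R := sqrt (cre z ^ 2 + cim z ^ 2).
Definition cinv (z : Cx) : Cx :=
  (cre z / (cre z ^ 2 + cim z ^ 2), - cim z / (cre z ^ 2 + cim z ^ 2)).
Definition cdiv (z w : Cx) : Cx := cmul z (cinv w).
Definition creal (a : R) : Cx := (a, 0).
(* principal branch of the complex square root (branch cut on (-oo,0],
   with sqrt(-a) = i sqrt a for a > 0) *)
Definition csqrt (z : Cx) : Cx :=
  (sqrt ((cmod z + cre z) / 2),
   (if Rle_dec 0 (cim z) then 1 else -1) * sqrt ((cmod z - cre z) / 2)).

Definition nu (mu lam e : R) (p : R3) : Cx :=
  (mu / lam ^ 2 * (vnorm p - px p / e),
   - (mu / lam ^ 2 * (py p * sqrt (1 - e ^ 2) / e))).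

Definition inN (mu lam e : R) (p : R3) : Prop :=
  p = (0, 0, 0) \/
  (py p = 0 /\ cim (nu mu lam e p) = 0 /\
   0 <= cre (nu mu lam e p) <= 4).

Definition Reps (mu lam e eps : R) (p : R3) : R :=
  let v := nu mu lam e p in
  let w := csqrt (csub (creal 1) (cdiv (creal 4) v)) in
  lam / eps ^ 2 *
   (ln (cmod v) + 2 * ln (cmod (cadd (creal 1) w)) - mu * vnorm p / lam ^ 2
    + / 2 * cre (cmul v (csub (creal 1) w))).

Definition lnrho (mu lam e eps : R) (T : R3 -> R) (p : R3) : R :=
  ln (T p * exp (2 * Reps mu lam e eps p)).

(* G_u f (x) = eps^2/2 Lap f(x) + u(x) . grad f(x), u = eps^2/2 grad ln rho,
   given Lap f(x) = lap, grad f(x) = df, grad ln rho(x) = g *)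
Definition Gu_value (eps : R) (g df : R3) (lap : R) : R :=
  eps ^ 2 / 2 * lap +
  (eps ^ 2 / 2 * px g * px df + eps ^ 2 / 2 * py g * py df
   + eps ^ 2 / 2 * pz g * pz df).

(* Write R_eps = lam/eps^2 (Phi(nu) - mu |x| / lam^2) with
   Phi(v) = ln|v| + 2 ln|1 + w| + Re(v (1 - w)) / 2 and w = sqrt(1 - 4/v).
   Since Phi = Re F for a holomorphic F with F' = (1 - w)/2, the chain rule
   gives d_i Phi(nu) = Re((1 - w) d_i nu) / 2 (Phi_along_curve).  Because nu is
   homogeneous of degree one, x . grad Phi(nu) = Re((1 - w) nu) / 2, and from
   v = 4 / (1 - w^2) this equals Re(2 / (1 + w)) <= 2 as Re w > 0 (root_bound,
   Phi_nu_radial).  With grad |x| = x/|x| and Lap |x| = 2/|x| one obtains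
     G_u |x| = eps^2/|x| + eps^2/2 (grad ln T . x/|x|) + lam (x . grad Phi(nu))/|x| - mu/lam
             <= eps^2/|x| + eps^2 C/2 + 2 lam/|x| - mu/lam,
   which is <= eps^2 C/2 - mu/(2 lam) = - eps^2 Ct/2 once |x| >= 2 lam (eps^2 + 2 lam)/mu. *)

From Stdlib Require Import Reals Lra Psatz Lia.
Open Scope R_scope.

Notation dpl := derivable_pt_lim.

Lemma dpl_value f x l l' : dpl f x l -> l = l' -> dpl f x l'.
Proof. intros H ->; exact H. Qed.

Lemma dpl_local f g x l d : 0 < d -> (forall t, Rabs (t - x) < d -> f t = g t) ->
  dpl f x l -> dpl g x l.
Proof.
  intros Hd E H eps Heps. destruct (H eps Heps) as [del Hdel].
  assert (Hm : 0 < Rmin del d) by (apply Rmin_pos; [apply (cond_pos del)|lra]).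
  exists (mkposreal _ Hm). intros h Hh0 Hh. simpl in Hh.
  rewrite <- (E (x + h)), <- (E x).
  - apply Hdel; auto. eapply Rlt_le_trans; [exact Hh|apply Rmin_l].
  - rewrite Rminus_diag, Rabs_R0; lra.
  - replace (x + h - x) with h by ring. eapply Rlt_le_trans; [exact Hh|apply Rmin_r].
Qed.

Lemma dpl_ext f g x l : (forall t, f t = g t) -> dpl f x l -> dpl g x l.
Proof. intros E. apply (dpl_local f g x l 1); [lra|auto]. Qed.

(* The differentiation rules, stated for functions written as lambda terms so
   that they apply by unification in the tactic [derive] below. *)
Lemma dpl_const c x : dpl (fun _ => c) x 0.
Proof. apply derivable_pt_lim_const. Qed.
Lemma dpl_id x : dpl (fun t => t) x 1.
Proof. apply derivable_pt_lim_id. Qed.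
Lemma dpl_plus f g x lf lg : dpl f x lf -> dpl g x lg -> dpl (fun t => f t + g t) x (lf + lg).
Proof. intros; apply (derivable_pt_lim_plus f g); auto. Qed.
Lemma dpl_minus f g x lf lg : dpl f x lf -> dpl g x lg -> dpl (fun t => f t - g t) x (lf - lg).
Proof. intros; apply (derivable_pt_lim_minus f g); auto. Qed.
Lemma dpl_mult f g x lf lg : dpl f x lf -> dpl g x lg ->
  dpl (fun t => f t * g t) x (lf * g x + f x * lg).
Proof. intros; apply (derivable_pt_lim_mult f g); auto. Qed.
Lemma dpl_opp f x lf : dpl f x lf -> dpl (fun t => - f t) x (- lf).
Proof. intros; apply (derivable_pt_lim_opp f); auto. Qed.
Lemma dpl_div f g x lf lg : dpl f x lf -> dpl g x lg -> g x <> 0 ->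
  dpl (fun t => f t / g t) x ((lf * g x - lg * f x) / (g x)²).
Proof. intros; apply (derivable_pt_lim_div f g); auto. Qed.
Lemma dpl_pow f x lf n : dpl f x lf -> dpl (fun t => f t ^ n) x (INR n * f x ^ pred n * lf).
Proof.
  intros H. apply (derivable_pt_lim_comp f (fun y => y ^ n)); auto.
  apply derivable_pt_lim_pow.
Qed.
Lemma dpl_sqrt f x lf : dpl f x lf -> 0 < f x ->
  dpl (fun t => sqrt (f t)) x (lf / (2 * sqrt (f x))).
Proof.
  intros H P. apply dpl_value with (/ (2 * sqrt (f x)) * lf); [|unfold Rdiv; ring].
  apply (derivable_pt_lim_comp f sqrt); auto. apply derivable_pt_lim_sqrt; auto.
Qed.
Lemma dpl_ln f x lf : dpl f x lf -> 0 < f x -> dpl (fun t => ln (f t)) x (lf / f x).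
Proof.
  intros H P. apply dpl_value with (/ f x * lf); [|unfold Rdiv; ring].
  apply (derivable_pt_lim_comp f ln); auto. apply derivable_pt_lim_ln; auto.
Qed.
Lemma dpl_ln_sqrt f x lf : dpl f x lf -> 0 < f x ->
  dpl (fun t => ln (sqrt (f t))) x (lf / (2 * f x)).
Proof.
  intros H P. eapply dpl_value.
  - apply dpl_ln; [apply dpl_sqrt; [exact H|exact P]|apply sqrt_lt_R0; auto].
  - assert (S : sqrt (f x) * sqrt (f x) = f x) by (apply sqrt_sqrt; lra).
    assert (0 < sqrt (f x)) by (apply sqrt_lt_R0; auto).
    replace (2 * f x) with (2 * (sqrt (f x) * sqrt (f x))) by (rewrite S; ring).
    field. lra.
Qed.

Lemma pos_near f x l : dpl f x l -> 0 < f x ->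
  exists d, 0 < d /\ forall t, Rabs (t - x) < d -> 0 < f t.
Proof.
  intros H P.
  assert (Hc : continuity_pt f x) by (apply derivable_continuous_pt; exists l; exact H).
  destruct (Hc (f x) P) as [alp [Ha Hf]].
  exists alp; split; auto. intros t Ht.
  destruct (Req_dec t x) as [->|Hne]; auto.
  assert (Hd : dist R_met (f t) (f x) < f x) by (apply Hf; repeat split; auto).
  simpl in Hd. unfold R_dist in Hd. apply Rabs_def2 in Hd. lra.
Qed.

(* Backward chaining through the differentiation rules; it leaves the
   side conditions (positivity, non-vanishing) as goals. *)
Ltac derive := repeat first
  [ eassumption | eapply dpl_const | eapply dpl_id | eapply dpl_plus | eapply dpl_minus
  | eapply dpl_pow | eapply dpl_div | eapply dpl_mult | eapply dpl_opp
  | eapply dpl_ln_sqrt | eapply dpl_sqrt | eapply dpl_ln ].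

Lemma csqrt_re_pos z : 0 < cmod z + cre z -> 0 < cre (csqrt z).
Proof. intros H. apply sqrt_lt_R0. lra. Qed.

Lemma csqrt_re_pos_inv z : 0 < cre (csqrt z) ->
  0 < (cmod z + cre z) / 2 /\ 0 < cre z ^ 2 + cim z ^ 2.
Proof.
  intros Hp. assert (Ha : 0 < (cmod z + cre z) / 2).
  { apply sqrt_lt_0_alt. rewrite sqrt_0. exact Hp. }
  split; [exact Ha|]. unfold cmod in Ha.
  destruct (Rle_lt_dec (cre z ^ 2 + cim z ^ 2) 0) as [H|]; auto.
  rewrite (sqrt_neg_0 _ H) in Ha. pose proof (pow2_ge_0 (cim z)).
  assert (0 < cre z ^ 2) by (apply pow_lt; lra). lra.
Qed.

Lemma csqrt_spec z : 0 < cre (csqrt z) ->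
  let p := cre (csqrt z) in let q := cim (csqrt z) in
  q = cim z / (2 * p) /\ cre z = p ^ 2 - q ^ 2 /\ cim z = 2 * p * q /\
  cmod z = p ^ 2 + q ^ 2.
Proof.
  destruct z as [x y]. unfold csqrt, cmod, cre, cim. cbn [fst snd].
  set (md := sqrt (x ^ 2 + y ^ 2)). intros Hu.
  assert (Hmd2 : md * md = x ^ 2 + y ^ 2) by (apply sqrt_sqrt; nra).
  assert (Hmd0 : 0 <= md) by apply sqrt_pos.
  assert (Hmx : - md <= x <= md) by nra.
  set (u := sqrt ((md + x) / 2)) in *. set (v := sqrt ((md - x) / 2)).
  assert (Hu2 : u * u = (md + x) / 2) by (apply sqrt_sqrt; lra).
  assert (Hv2 : v * v = (md - x) / 2) by (apply sqrt_sqrt; lra).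
  assert (Hv0 : 0 <= v) by apply sqrt_pos.
  assert (Huv : (2 * u * v) * (2 * u * v) = y * y).
  { replace ((2 * u * v) * (2 * u * v)) with (4 * (u * u) * (v * v)) by ring.
    rewrite Hu2, Hv2. nra. }
  assert (Hy : y = 2 * u * ((if Rle_dec 0 y then 1 else -1) * v)).
  { assert (Hs : 0 <= 2 * u * v) by nra.
    assert (Hf : (y - 2 * u * v) * (y + 2 * u * v) = 0) by nra.
    destruct (Rmult_integral _ _ Hf), (Rle_dec 0 y); nra. }
  set (q := (if Rle_dec 0 y then 1 else -1) * v) in *.
  assert (Hq2 : q * q = v * v) by (unfold q; destruct (Rle_dec 0 y); ring).
  repeat split.
  - rewrite Hy. field. lra.
  - nra.
  - exact Hy.
  - nra.
Qed.

Lemma cmod_re_nonpos z : cmod z + cre z <= 0 -> cim z = 0 /\ cre z <= 0.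
Proof.
  unfold cmod. intros H.
  assert (Hm2 : sqrt (cre z ^ 2 + cim z ^ 2) * sqrt (cre z ^ 2 + cim z ^ 2)
                = cre z ^ 2 + cim z ^ 2) by (apply sqrt_sqrt; nra).
  assert (Hm0 := sqrt_pos (cre z ^ 2 + cim z ^ 2)).
  split; nra.
Qed.

Definition sq_arg (v : Cx) : Cx := csub (creal 1) (cdiv (creal 4) v).
Definition root (v : Cx) : Cx := csqrt (sq_arg v).
Definition Phi (v : Cx) : R :=
  ln (cmod v) + 2 * ln (cmod (cadd (creal 1) (root v)))
  + / 2 * cre (cmul v (csub (creal 1) (root v))).

Lemma sq_arg_re a b : cre (sq_arg (a, b)) = 1 - 4 * a / (a ^ 2 + b ^ 2).
Proof. cbn. unfold Rdiv. ring. Qed.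
Lemma sq_arg_im a b : cim (sq_arg (a, b)) = 4 * b / (a ^ 2 + b ^ 2).
Proof. cbn. unfold Rdiv. ring. Qed.

(* R_eps is expressed through Phi; this isolates the complex-analytic part. *)
Lemma Reps_Phi mu lam e eps p :
  Reps mu lam e eps p = lam / eps ^ 2 * (Phi (nu mu lam e p) - mu * vnorm p / lam ^ 2).
Proof. unfold Reps, Phi, root, sq_arg. ring. Qed.

Lemma sq_arg_inv a b : 0 < a ^ 2 + b ^ 2 ->
  let z := sq_arg (a, b) in
  (1 - cre z) ^ 2 + cim z ^ 2 <> 0 /\
  a = 4 * (1 - cre z) / ((1 - cre z) ^ 2 + cim z ^ 2) /\
  b = 4 * cim z / ((1 - cre z) ^ 2 + cim z ^ 2).
Proof.
  intros Hm z.
  assert (Ere := sq_arg_re a b). assert (Eim := sq_arg_im a b). fold z in Ere, Eim.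
  assert (ED : (1 - cre z) ^ 2 + cim z ^ 2 = 16 / (a ^ 2 + b ^ 2)).
  { rewrite Ere, Eim. field. lra. }
  rewrite ED, Ere, Eim.
  split; [apply Rgt_not_eq, Rdiv_lt_0_compat; lra|]. split; field; lra.
Qed.

Lemma root_param a b : 0 < a ^ 2 + b ^ 2 -> 0 < cre (root (a, b)) ->
  let p := cre (root (a, b)) in let q := cim (root (a, b)) in
  let D := (1 - (p ^ 2 - q ^ 2)) ^ 2 + (2 * p * q) ^ 2 in
  D <> 0 /\ a = 4 * (1 - (p ^ 2 - q ^ 2)) / D /\ b = 4 * (2 * p * q) / D.
Proof.
  intros Hm Hp p q D.
  destruct (csqrt_spec _ Hp) as [_ [Ere [Eim _]]].
  destruct (sq_arg_inv a b Hm) as [HD [Ea Eb]].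
  unfold D, p, q, root. rewrite <- Ere, <- Eim. auto.
Qed.

(* The key estimate Re((1 - w) v) = Re(4 / (1 + w)) <= 4, valid since Re w > 0. *)
Lemma root_bound a b : 0 < a ^ 2 + b ^ 2 -> 0 < cre (root (a, b)) ->
  (1 - cre (root (a, b))) * a + cim (root (a, b)) * b <= 4.
Proof.
  intros Hm Hp. destruct (root_param a b Hm Hp) as [HD [Ea Eb]].
  set (p := cre (root (a, b))) in *. set (q := cim (root (a, b))) in *.
  assert (HS : 0 < (1 + p) ^ 2 + q ^ 2) by nra.
  assert (E : (1 - p) * a + q * b = 4 * (1 + p) / ((1 + p) ^ 2 + q ^ 2)).
  { rewrite Ea, Eb. field. split; lra. }
  rewrite E. apply Rmult_le_reg_r with ((1 + p) ^ 2 + q ^ 2); auto.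
  unfold Rdiv. rewrite Rmult_assoc, Rinv_l by lra. nra.
Qed.

Lemma root_re_formula a b : cre (root (a, b)) =
  sqrt ((sqrt ((1 - 4 * a / (a ^ 2 + b ^ 2)) ^ 2 + (4 * b / (a ^ 2 + b ^ 2)) ^ 2)
         + (1 - 4 * a / (a ^ 2 + b ^ 2))) / 2).
Proof. unfold root, csqrt, cmod. cbn [cre fst]. now rewrite sq_arg_re, sq_arg_im. Qed.

Lemma Phi_real_form a b : 0 < cre (root (a, b)) ->
  let p := cre (root (a, b)) in let q := 4 * b / (a ^ 2 + b ^ 2) / (2 * p) in
  Phi (a, b) = ln (sqrt (a ^ 2 + b ^ 2)) + 2 * ln (sqrt ((1 + p) ^ 2 + q ^ 2))
               + / 2 * (a * (1 - p) + b * q).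
Proof.
  intros Hp p q. destruct (csqrt_spec _ Hp) as [EQ _]. fold (root (a, b)) in EQ.
  rewrite sq_arg_im in EQ. unfold q, p. rewrite <- EQ.
  unfold Phi, cmod, cadd, csub, cmul, creal, cre, cim. cbn [fst snd].
  rewrite Rplus_0_l. f_equal. ring.
Qed.

(* Chain rule for Phi along a curve t |-> a t + i b t: since Phi = Re F with F
   holomorphic and F' (v) = (1 - root v) / 2, the derivative is
   Re ((1 - w) (a' + i b')) / 2 with w = root (a t0 + i b t0). *)
Lemma Phi_along_curve (a b : R -> R) t0 a' b' :
  dpl a t0 a' -> dpl b t0 b' -> 0 < a t0 ^ 2 + b t0 ^ 2 -> 0 < cre (root (a t0, b t0)) ->
  dpl (fun t => Phi (a t, b t)) t0
    (((1 - cre (root (a t0, b t0))) * a' + cim (root (a t0, b t0)) * b') / 2).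
Proof.
  intros Ha Hb Hm Hp.
  pose (M := fun t => a t ^ 2 + b t ^ 2).
  pose (X := fun t => 1 - 4 * a t / M t).
  pose (Y := fun t => 4 * b t / M t).
  pose (P := fun t => sqrt ((sqrt (X t ^ 2 + Y t ^ 2) + X t) / 2)).
  assert (EP : forall t, cre (root (a t, b t)) = P t) by (intro t; apply root_re_formula).
  assert (HP0 : 0 < P t0) by (rewrite <- EP; exact Hp).
  destruct (csqrt_re_pos_inv _ Hp) as [HPa HN].
  unfold cmod in HPa. rewrite sq_arg_re, sq_arg_im in HPa, HN.
  evar (lM : R). assert (dM : dpl M t0 lM) by (unfold M, lM; derive).
  evar (lX : R). assert (dX : dpl X t0 lX) by (unfold X, lX; derive; unfold M; lra).
  evar (lY : R). assert (dY : dpl Y t0 lY) by (unfold Y, lY; derive; unfold M; lra).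
  evar (lP : R). assert (dP : dpl P t0 lP) by (unfold P, lP; derive; cbv beta; auto).
  destruct (pos_near P t0 lP dP HP0) as [d [Hd Hnear]].
  (* near t0, Phi (a t, b t) is the real expression of Phi_real_form *)
  apply (dpl_local (fun t => ln (sqrt (M t)) + 2 * ln (sqrt ((1 + P t) ^ 2 + (Y t / (2 * P t)) ^ 2))
                             + / 2 * (a t * (1 - P t) + b t * (Y t / (2 * P t)))) _ t0 _ d Hd).
  { intros t Ht. assert (Ht' := Hnear t Ht). rewrite <- EP in Ht'.
    rewrite (Phi_real_form _ _ Ht'), EP. reflexivity. }
  eapply dpl_value. { derive; cbv beta; try lra. all: unfold M; nra. }
  (* identify the value using w^2 = 1 - 4/v, i.e. v = 4 / (1 - w^2) *)
  subst lM lX lY lP. cbv beta.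
  destruct (csqrt_spec _ Hp) as [Eq [Ere [Eim Emod]]]. fold (root (a t0, b t0)) in *.
  destruct (root_param (a t0) (b t0) Hm Hp) as [HD [Ea Eb]].
  set (p := cre (root (a t0, b t0))) in *. set (q := cim (root (a t0, b t0))) in *.
  unfold cmod in Emod. rewrite sq_arg_re in Ere, Emod. rewrite sq_arg_im in Eim, Eq, Emod.
  change (1 - 4 * a t0 / (a t0 ^ 2 + b t0 ^ 2)) with (X t0) in Ere, Emod.
  change (4 * b t0 / (a t0 ^ 2 + b t0 ^ 2)) with (Y t0) in Eim, Eq, Emod.
  change (sqrt ((sqrt (X t0 ^ 2 + Y t0 ^ 2) + X t0) / 2)) with (P t0).
  rewrite <- (EP t0). fold p. rewrite <- Eq, Emod, Ere, Eim.
  change (M t0) with (a t0 ^ 2 + b t0 ^ 2). rewrite Ea, Eb.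
  simpl INR; simpl pred. unfold Rsqr.
  field. split; [exact HD|]. split; [intro E; apply HD; nra|]. repeat split; nra.
Qed.

Definition coord (i : nat) (p : R3) : R :=
  match i with 0%nat => px p | 1%nat => py p | _ => pz p end.
Definition vec_of (f : nat -> R) : R3 := (f 0%nat, f 1%nat, f 2%nat).

Lemma upd0 x i : (i < 3)%nat -> upd x i 0 = x.
Proof.
  intros Hi. destruct x as [[x1 x2] x3].
  destruct i as [|[|[|i]]]; [| | |lia]; unfold upd, px, py, pz; simpl;
    rewrite Rplus_0_r; reflexivity.
Qed.

Lemma is_grad_of_partials h x f :
  (forall i, (i < 3)%nat -> is_partial h x i (f i)) -> is_grad h x (vec_of f).
Proof. intros H. repeat split; apply H; lia. Qed.

Lemma is_grad_unique h x f g :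
  (forall i, (i < 3)%nat -> is_partial h x i (f i)) -> is_grad h x g -> g = vec_of f.
Proof.
  intros H [G0 [G1 G2]].
  apply (uniqueness_limite _ _ _ _ (H 0%nat ltac:(lia))) in G0.
  apply (uniqueness_limite _ _ _ _ (H 1%nat ltac:(lia))) in G1.
  apply (uniqueness_limite _ _ _ _ (H 2%nat ltac:(lia))) in G2.
  destruct g as [[g0 g1] g2]. unfold px, py, pz in *. simpl in *. subst. reflexivity.
Qed.

Lemma second_partial_char f x i F l0 d l : 0 < d ->
  (forall t, Rabs t < d -> dpl (fun s => f (upd x i s)) t (F t)) -> dpl F 0 l0 ->
  (is_second_partial f x i l <-> l = l0).
Proof.
  intros Hd HF HF0. split.
  - intros [d1 [Hd1 [f' [Hf1 Hf2]]]].
    apply (uniqueness_limite F 0); [|exact HF0].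
    apply (dpl_local f' _ 0 l (Rmin d d1)); [apply Rmin_pos; auto| |exact Hf2].
    intros t Ht. rewrite Rminus_0_r in Ht.
    apply (uniqueness_limite (fun s => f (upd x i s)) t).
    + apply Hf1. eapply Rlt_le_trans; [exact Ht|apply Rmin_r].
    + apply HF. eapply Rlt_le_trans; [exact Ht|apply Rmin_l].
  - intros ->. exists d. split; [exact Hd|]. exists F. auto.
Qed.

Lemma vnorm_sq x : vnorm x * vnorm x = px x ^ 2 + py x ^ 2 + pz x ^ 2.
Proof. unfold vnorm. apply sqrt_sqrt. nra. Qed.

Lemma vnorm_upd x i s : (i < 3)%nat ->
  vnorm (upd x i s) = sqrt (px x ^ 2 + py x ^ 2 + pz x ^ 2 + 2 * coord i x * s + s * s).
Proof.
  intros Hi. unfold vnorm at 1. f_equal.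
  destruct i as [|[|[|i]]]; [| | |lia]; unfold upd, coord; cbn [px py pz fst snd]; ring.
Qed.

Lemma vnorm_line_deriv x i t : (i < 3)%nat -> 0 < vnorm (upd x i t) ->
  dpl (fun s => vnorm (upd x i s)) t ((coord i x + t) / vnorm (upd x i t)).
Proof.
  intros Hi Hp.
  eapply dpl_ext. { intro s. symmetry. apply vnorm_upd. exact Hi. }
  rewrite (vnorm_upd x i t Hi) in *.
  eapply dpl_value.
  { derive. cbv beta. apply sqrt_lt_0_alt. rewrite sqrt_0. exact Hp. }
  cbv beta. field. lra.
Qed.

Lemma vnorm_partial x i : (i < 3)%nat -> 0 < vnorm x ->
  is_partial vnorm x i (coord i x / vnorm x).
Proof.
  intros Hi Hp. unfold is_partial. eapply dpl_value.
  - apply vnorm_line_deriv; [exact Hi|]. rewrite upd0; auto.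
  - rewrite upd0, Rplus_0_r; auto.
Qed.

Lemma vnorm_grad x g : 0 < vnorm x ->
  (is_grad vnorm x g <-> g = vec_of (fun i => coord i x / vnorm x)).
Proof.
  intros Hp. split.
  - apply is_grad_unique. intros; apply vnorm_partial; auto.
  - intros ->. apply is_grad_of_partials. intros; apply vnorm_partial; auto.
Qed.

Lemma vnorm_second x i l : (i < 3)%nat -> 0 < vnorm x ->
  (is_second_partial vnorm x i l <->
   l = (vnorm x * vnorm x - coord i x ^ 2) / vnorm x ^ 3).
Proof.
  intros Hi Hp.
  assert (Hd : dpl (fun s => vnorm (upd x i s)) 0 (coord i x / vnorm x))
    by (apply vnorm_partial; auto).
  destruct (pos_near _ 0 _ Hd) as [d [Hd0 Hnear]]; [rewrite upd0; auto|].
  apply (second_partial_char _ _ _ (fun t => (coord i x + t) / vnorm (upd x i t)) _ d l Hd0).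
  - intros t Ht. apply vnorm_line_deriv; auto. apply Hnear. rewrite Rminus_0_r; exact Ht.
  - eapply dpl_value.
    + derive. cbv beta. rewrite upd0; auto. lra.
    + cbv beta. rewrite upd0; auto. unfold Rsqr. field. lra.
Qed.

Lemma vnorm_laplacian x l : 0 < vnorm x -> (is_laplacian vnorm x l <-> l = 2 / vnorm x).
Proof.
  intros Hp. assert (S := vnorm_sq x).
  assert (Hsum : forall a b c, a = (vnorm x * vnorm x - coord 0 x ^ 2) / vnorm x ^ 3 ->
    b = (vnorm x * vnorm x - coord 1 x ^ 2) / vnorm x ^ 3 ->
    c = (vnorm x * vnorm x - coord 2 x ^ 2) / vnorm x ^ 3 -> a + b + c = 2 / vnorm x).
  { intros a b c -> -> ->. unfold coord. cbv iota.
    replace (px x ^ 2) with (vnorm x * vnorm x - py x ^ 2 - pz x ^ 2) by lra.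
    field. lra. }
  split.
  - intros [a [b [c [Ha [Hb [Hc ->]]]]]].
    apply Hsum; [apply (vnorm_second x 0) | apply (vnorm_second x 1) | apply (vnorm_second x 2)];
      auto; lia.
  - intros ->. do 3 eexists. repeat split.
    1-3: apply vnorm_second; [lia|exact Hp|reflexivity].
    symmetry. apply Hsum; reflexivity.
Qed.

(* Dot product of component functions, and the Cauchy-Schwarz inequality
   (proved through Lagrange's identity). *)
Definition dot (u v : nat -> R) : R := u 0%nat * v 0%nat + u 1%nat * v 1%nat + u 2%nat * v 2%nat.

Lemma cauchy_schwarz u v : dot u v <= vnorm (vec_of u) * vnorm (vec_of v).
Proof.
  unfold dot, vnorm, vec_of, px, py, pz. cbn [fst snd].
  set (a := sqrt (u 0%nat ^ 2 + u 1%nat ^ 2 + u 2%nat ^ 2)).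
  set (b := sqrt (v 0%nat ^ 2 + v 1%nat ^ 2 + v 2%nat ^ 2)).
  assert (Ha : a * a = u 0%nat ^ 2 + u 1%nat ^ 2 + u 2%nat ^ 2) by (apply sqrt_sqrt; nra).
  assert (Hb : b * b = v 0%nat ^ 2 + v 1%nat ^ 2 + v 2%nat ^ 2) by (apply sqrt_sqrt; nra).
  assert (Ha0 : 0 <= a) by apply sqrt_pos. assert (Hb0 : 0 <= b) by apply sqrt_pos.
  assert (L : (a * b) ^ 2 - (u 0%nat * v 0%nat + u 1%nat * v 1%nat + u 2%nat * v 2%nat) ^ 2
    = (u 0%nat * v 1%nat - u 1%nat * v 0%nat) ^ 2 + (u 0%nat * v 2%nat - u 2%nat * v 0%nat) ^ 2
      + (u 1%nat * v 2%nat - u 2%nat * v 1%nat) ^ 2).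
  { replace ((a * b) ^ 2) with ((a * a) * (b * b)) by ring. rewrite Ha, Hb. ring. }
  set (s := u 0%nat * v 0%nat + u 1%nat * v 1%nat + u 2%nat * v 2%nat) in *.
  assert (Hsq : s ^ 2 <= (a * b) ^ 2).
  { pose proof (pow2_ge_0 (u 0%nat * v 1%nat - u 1%nat * v 0%nat)).
    pose proof (pow2_ge_0 (u 0%nat * v 2%nat - u 2%nat * v 0%nat)).
    pose proof (pow2_ge_0 (u 1%nat * v 2%nat - u 2%nat * v 1%nat)). lra. }
  assert (0 <= a * b) by nra. nra.
Qed.

Definition kron (i j : nat) : R := if Nat.eqb i j then 1 else 0.

Lemma coord_line_deriv x i j : (i < 3)%nat -> (j < 3)%nat ->
  dpl (fun t => coord j (upd x i t)) 0 (kron i j).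
Proof.
  intros Hi Hj.
  destruct i as [|[|[|i]]]; [| | |lia]; destruct j as [|[|[|j]]]; try lia;
  unfold upd, coord, kron; cbn [px py pz fst snd Nat.eqb];
  first [ apply dpl_const | eapply dpl_value; [apply dpl_plus; [apply dpl_const|apply dpl_id]|ring] ].
Qed.

Section NuDerivatives.
Variables (mu lam e : R).
Hypotheses (Hmu : 0 < mu) (Hlam : 0 < lam) (He : 0 < e < 1).

Definition dnu_re (x : R3) (i : nat) : R :=
  mu / lam ^ 2 * (coord i x / vnorm x - kron i 0 / e).
Definition dnu_im (i : nat) : R := - (mu / lam ^ 2 * (kron i 1 * sqrt (1 - e ^ 2) / e)).

Lemma nu_re_partial x i : (i < 3)%nat -> 0 < vnorm x ->
  dpl (fun t => cre (nu mu lam e (upd x i t))) 0 (dnu_re x i).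
Proof.
  intros Hi Hp. unfold dnu_re. cbn [cre nu fst].
  change (fun t => mu / lam ^ 2 * (vnorm (upd x i t) - px (upd x i t) / e))
    with (fun t => mu / lam ^ 2 * (vnorm (upd x i t) - coord 0 (upd x i t) / e)).
  assert (dV := vnorm_partial x i Hi Hp). assert (dX := coord_line_deriv x i 0 Hi ltac:(lia)).
  eapply dpl_value; [derive; cbv beta; lra|].
  cbv beta. rewrite upd0 by auto. unfold Rsqr. field. lra.
Qed.

Lemma nu_im_partial x i : (i < 3)%nat ->
  dpl (fun t => cim (nu mu lam e (upd x i t))) 0 (dnu_im i).
Proof.
  intros Hi. unfold dnu_im. cbn [cim nu snd].
  change (fun t => - (mu / lam ^ 2 * (py (upd x i t) * sqrt (1 - e ^ 2) / e)))
    with (fun t => - (mu / lam ^ 2 * (coord 1 (upd x i t) * sqrt (1 - e ^ 2) / e))).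
  assert (dY := coord_line_deriv x i 1 Hi ltac:(lia)).
  eapply dpl_value; [derive; cbv beta; lra|].
  cbv beta. unfold Rsqr. field. lra.
Qed.

Lemma im_nu_zero x : cim (nu mu lam e x) = 0 -> py x = 0.
Proof.
  unfold nu, cim; cbn [snd]. intro E.
  assert (Hk : 0 < mu / lam ^ 2 * (sqrt (1 - e ^ 2) / e)).
  { apply Rmult_lt_0_compat; [apply Rdiv_lt_0_compat; nra|].
    apply Rdiv_lt_0_compat; [apply sqrt_lt_R0; nra|lra]. }
  assert (E2 : mu / lam ^ 2 * (sqrt (1 - e ^ 2) / e) * py x = 0).
  { replace (mu / lam ^ 2 * (sqrt (1 - e ^ 2) / e) * py x)
      with (- - (mu / lam ^ 2 * (py x * sqrt (1 - e ^ 2) / e))) by (field; lra).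
    rewrite E. ring. }
  destruct (Rmult_integral _ _ E2); [lra|auto].
Qed.

(* Off the exceptional set, nu <> 0 and 1 - 4/nu avoids the branch cut of the
   square root, so that Re (root nu) > 0. *)
Lemma notN_regular x : ~ inN mu lam e x ->
  0 < cre (nu mu lam e x) ^ 2 + cim (nu mu lam e x) ^ 2 /\ 0 < cre (root (nu mu lam e x)).
Proof.
  intros HN. assert (Hy := im_nu_zero x).
  change (nu mu lam e x) with (cre (nu mu lam e x), cim (nu mu lam e x)) in *.
  set (a := cre (nu mu lam e x)) in *. set (b := cim (nu mu lam e x)) in *.
  assert (Hm : 0 < a ^ 2 + b ^ 2).
  { destruct (Rle_lt_dec (a ^ 2 + b ^ 2) 0) as [H|H]; auto. exfalso.
    assert (a = 0) by nra. assert (b = 0) by nra. apply HN. right. fold a b. repeat split; auto; lra. }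
  split; auto. apply csqrt_re_pos.
  destruct (Rle_lt_dec (cmod (sq_arg (a, b)) + cre (sq_arg (a, b))) 0) as [H|]; auto. exfalso.
  apply cmod_re_nonpos in H. rewrite sq_arg_re, sq_arg_im in H. destruct H as [Hz Hre].
  assert (Hb : b = 0).
  { assert (E : 4 * b = 4 * b / (a ^ 2 + b ^ 2) * (a ^ 2 + b ^ 2)) by (field; lra).
    rewrite Hz in E. lra. }
  rewrite Hb in Hre, Hm.
  assert (Ha : 0 < a <= 4).
  { replace (4 * a / (a ^ 2 + 0 ^ 2)) with (4 / a) in Hre by (field; nra).
    assert (Ha0 : a <> 0) by (intro E; rewrite E in Hm; lra).
    destruct (Rlt_le_dec 0 a) as [Hpos|Hneg].
    - assert (H4 : a * 1 <= a * (4 / a)) by (apply Rmult_le_compat_l; lra).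
      replace (a * (4 / a)) with 4 in H4 by (field; lra). lra.
    - assert (4 / a < 0) by (unfold Rdiv; apply Rmult_pos_neg; [lra|apply Rinv_neg; lra]).
      lra. }
  apply HN. right. fold a b. repeat split; auto; lra.
Qed.

Definition dPhi (x : R3) (i : nat) : R :=
  ((1 - cre (root (nu mu lam e x))) * dnu_re x i + cim (root (nu mu lam e x)) * dnu_im i) / 2.

Lemma Phi_nu_partial x i : (i < 3)%nat -> 0 < vnorm x -> ~ inN mu lam e x ->
  dpl (fun t => Phi (nu mu lam e (upd x i t))) 0 (dPhi x i).
Proof.
  intros Hi Hp HN. destruct (notN_regular x HN) as [Hm Hr].
  pose proof (Phi_along_curve _ _ 0 _ _ (nu_re_partial x i Hi Hp) (nu_im_partial x i Hi)) as H.
  cbv beta in H. rewrite upd0 in H by exact Hi. exact (H Hm Hr).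
Qed.

(* Euler's identity for the degree-one homogeneous map nu: x . grad nu = nu. *)
Lemma nu_euler x : 0 < vnorm x ->
  dot (fun i => coord i x) (dnu_re x) = cre (nu mu lam e x) /\
  dot (fun i => coord i x) dnu_im = cim (nu mu lam e x).
Proof.
  intros Hp. assert (S := vnorm_sq x).
  unfold dot, dnu_re, dnu_im, kron, coord, nu, cre, cim. cbn [fst snd Nat.eqb].
  split; [|unfold Rdiv; ring].
  transitivity (mu / lam ^ 2 * ((px x ^ 2 + py x ^ 2 + pz x ^ 2) / vnorm x - px x / e)).
  - field. lra.
  - rewrite <- S. field. lra.
Qed.

Lemma Phi_nu_radial x : 0 < vnorm x -> ~ inN mu lam e x ->
  dot (fun i => coord i x) (dPhi x) <= 2.
Proof.
  intros Hp HN. destruct (notN_regular x HN) as [Hm Hr].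
  destruct (nu_euler x Hp) as [Ere Eim].
  assert (E : dot (fun i => coord i x) (dPhi x) =
    ((1 - cre (root (nu mu lam e x))) * dot (fun i => coord i x) (dnu_re x)
     + cim (root (nu mu lam e x)) * dot (fun i => coord i x) dnu_im) / 2)
    by (unfold dot, dPhi; field).
  rewrite E, Ere, Eim.
  assert (B : (1 - cre (root (nu mu lam e x))) * cre (nu mu lam e x)
              + cim (root (nu mu lam e x)) * cim (nu mu lam e x) <= 4)
    by exact (root_bound _ _ Hm Hr).
  lra.
Qed.

End NuDerivatives.

Lemma lnT_partial (T : R3 -> R) x i l : (i < 3)%nat -> 0 < T x ->
  is_partial T x i l -> is_partial (fun y => ln (T y)) x i (l / T x).
Proof.
  intros Hi HT H. unfold is_partial in *. eapply dpl_value; [apply dpl_ln; [exact H|]|].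
  all: cbv beta; rewrite upd0 by exact Hi; auto.
Qed.

Lemma lnrho_split mu lam e eps (T : R3 -> R) y : 0 < T y ->
  lnrho mu lam e eps T y =
  ln (T y) + 2 * (lam / eps ^ 2 * (Phi (nu mu lam e y) - mu * vnorm y / lam ^ 2)).
Proof.
  intros HT. unfold lnrho. rewrite ln_mult by (auto; apply exp_pos).
  rewrite ln_exp, Reps_Phi. reflexivity.
Qed.

Lemma lnrho_partial mu lam e eps (T : R3 -> R) x i k :
  0 < mu -> 0 < lam -> 0 < e < 1 -> 0 < eps -> (forall y, 0 < T y) ->
  (i < 3)%nat -> 0 < vnorm x -> ~ inN mu lam e x ->
  is_partial (fun y => ln (T y)) x i k ->
  is_partial (lnrho mu lam e eps T) x i
    (k + 2 * (lam / eps ^ 2 * (dPhi mu lam e x i - mu * (coord i x / vnorm x) / lam ^ 2))).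
Proof.
  intros Hmu Hlam He Heps HT Hi Hp HN Hk. unfold is_partial in *.
  eapply dpl_ext; [intro t; symmetry; apply lnrho_split, HT|].
  assert (HPhi := Phi_nu_partial mu lam e Hmu Hlam He x i Hi Hp HN).
  assert (dV := vnorm_partial x i Hi Hp).
  eapply dpl_value; [derive; cbv beta; nra|].
  cbv beta. rewrite upd0 by exact Hi. unfold Rsqr. field. lra.
Qed.

Lemma Gu_radial eps lam mu x (g k : nat -> R) : 0 < vnorm x -> 0 < eps -> 0 < lam ->
  Gu_value eps
    (vec_of (fun i => g i + 2 * (lam / eps ^ 2 * (k i - mu * (coord i x / vnorm x) / lam ^ 2))))
    (vec_of (fun i => coord i x / vnorm x)) (2 / vnorm x)
  = eps ^ 2 / vnorm x + eps ^ 2 / 2 * (dot (fun i => coord i x) g / vnorm x)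
    + lam * (dot (fun i => coord i x) k / vnorm x) - mu / lam.
Proof.
  intros Hp Heps Hlam. assert (S := vnorm_sq x).
  unfold Gu_value, vec_of, dot, coord. cbn [px py pz fst snd].
  replace (mu / lam) with (mu / lam * ((px x ^ 2 + py x ^ 2 + pz x ^ 2) / (vnorm x * vnorm x)))
    by (rewrite <- S; field; lra).
  field. lra.
Qed.

(* The elementary estimate behind the lemma: for |x| >= 2 lam (eps^2 + 2 lam) / mu the
   positive terms eps^2/|x| + 2 lam/|x| are absorbed by half of mu/lam. *)
Lemma drift_estimate eps lam mu C V G S : 0 < eps -> 0 < lam -> 0 < mu -> 0 < V ->
  G <= C * V -> S <= 2 -> 2 * lam * (eps ^ 2 + 2 * lam) / mu <= V ->
  eps ^ 2 / V + eps ^ 2 / 2 * (G / V) + lam * (S / V) - mu / lam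
  <= eps ^ 2 * C / 2 - mu / (2 * lam).
Proof.
  intros Heps Hlam Hmu HV HG HS HR.
  assert (HGV : G / V <= C).
  { apply Rmult_le_reg_r with V; auto. unfold Rdiv. rewrite Rmult_assoc, Rinv_l; lra. }
  assert (HSV : lam * (S / V) <= lam * (2 / V)).
  { apply Rmult_le_compat_l; [lra|]. unfold Rdiv. apply Rmult_le_compat_r; [|lra].
    left; apply Rinv_0_lt_compat; lra. }
  assert (HR' : (eps ^ 2 + 2 * lam) / V <= mu / (2 * lam)).
  { apply Rmult_le_reg_r with (2 * lam * V); [nra|].
    replace ((eps ^ 2 + 2 * lam) / V * (2 * lam * V)) with (2 * lam * (eps ^ 2 + 2 * lam))
      by (field; lra).
    replace (mu / (2 * lam) * (2 * lam * V)) with (mu * V) by (field; lra).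
    apply Rmult_le_reg_r with (/ mu); [apply Rinv_0_lt_compat; lra|].
    replace (mu * V * / mu) with V by (field; lra). exact HR. }
  assert (E : (eps ^ 2 + 2 * lam) / V = eps ^ 2 / V + lam * (2 / V)) by (field; lra).
  assert (HG2 : eps ^ 2 / 2 * (G / V) <= eps ^ 2 / 2 * C) by (apply Rmult_le_compat_l; nra).
  assert (E2 : mu / lam = 2 * (mu / (2 * lam))) by (field; lra).
  lra.
Qed.

Lemma drift_constant eps lam mu C : 0 < eps -> 0 < lam -> C < mu / (eps ^ 2 * lam) ->
  let Ct := (mu - eps ^ 2 * lam * C) / (eps ^ 2 * lam) in
  - (eps ^ 2 * Ct / 2) = eps ^ 2 * C / 2 - mu / (2 * lam) /\
  eps ^ 2 * C / 2 - mu / (2 * lam) < 0.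
Proof.
  intros Heps Hlam HCb Ct.
  assert (Hel : 0 < eps ^ 2 * lam) by (apply Rmult_lt_0_compat; [apply pow_lt|]; lra).
  split; [unfold Ct; field; split; lra|].
  apply Rmult_lt_compat_r with (r := eps ^ 2 * lam) in HCb; [|exact Hel].
  replace (mu / (eps ^ 2 * lam) * (eps ^ 2 * lam)) with mu in HCb by (field; lra).
  apply Rmult_lt_reg_r with (2 * lam); [lra|].
  replace ((eps ^ 2 * C / 2 - mu / (2 * lam)) * (2 * lam)) with (C * (eps ^ 2 * lam) - mu)
    by (field; lra). lra.
Qed.

Lemma radial_le_of_norm_lt x (g : nat -> R) C : vnorm (vec_of g) < C ->
  dot (fun i => coord i x) g <= C * vnorm x.
Proof.
  intros Hg. rewrite Rmult_comm.
  apply Rle_trans with (vnorm x * vnorm (vec_of g)); [apply cauchy_schwarz|].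
  apply Rmult_le_compat_l; [apply sqrt_pos|lra].
Qed.

Theorem lemma7p3
  (mu lam e eps : R) (T : R3 -> R) (r0 C : R)
  (Hmu : 0 < mu) (Hlam : 0 < lam) (He : 0 < e < 1) (Heps : 0 < eps <= 1)
  (HTpos : forall x, 0 < T x) (HT2 : C2_3 T)
  (HlnTb : exists M, forall x, Rabs (ln (T x)) <= M)
  (Hr0 : 0 < r0) (HC : 0 < C) (HCb : C < mu / (eps ^ 2 * lam))
  (Hgrad : forall x g, vnorm x > r0 -> is_grad (fun y => ln (T y)) x g -> vnorm g < C) :
  let Ct := (mu - eps ^ 2 * lam * C) / (eps ^ 2 * lam) in
  exists r1, r1 > r0 /\
    forall x, ~ inN mu lam e x -> vnorm x > r1 ->
      (exists g df lap, is_grad (lnrho mu lam e eps T) x g /\ is_grad vnorm x df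
                        /\ is_laplacian vnorm x lap) /\
      (forall g df lap, is_grad (lnrho mu lam e eps T) x g -> is_grad vnorm x df ->
         is_laplacian vnorm x lap ->
         Gu_value eps g df lap <= - (eps ^ 2 * Ct / 2) /\ - (eps ^ 2 * Ct / 2) < 0).
Proof.
  intros Ct. destruct HT2 as [D [_ [_ [HD _]]]].
  destruct (drift_constant eps lam mu C ltac:(lra) Hlam HCb) as [HCt HCt0]. fold Ct in HCt.
  set (K := 2 * lam * (eps ^ 2 + 2 * lam) / mu).
  assert (HK : 0 < K) by (apply Rdiv_lt_0_compat; [apply Rmult_lt_0_compat|]; nra).
  exists (r0 + K + 1). split; [lra|]. intros x HN Hx.
  assert (Hp : 0 < vnorm x) by lra.
  set (gT := fun i => D i x / T x).
  assert (HgT : forall i, (i < 3)%nat -> is_partial (fun y => ln (T y)) x i (gT i))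
    by (intros i Hi; apply lnT_partial; [exact Hi|apply HTpos|apply (HD i Hi)]).
  assert (Hrho := fun i Hi => lnrho_partial mu lam e eps T x i _ Hmu Hlam He ltac:(lra) HTpos
                                  Hi Hp HN (HgT i Hi)).
  split.
  - do 3 eexists. split; [apply is_grad_of_partials, Hrho|].
    split; [apply vnorm_grad; auto|apply vnorm_laplacian; auto].
  - intros g df lap Hg Hdf Hlap.
    rewrite (is_grad_unique _ _ _ _ Hrho Hg), (proj1 (vnorm_grad x df Hp) Hdf),
      (proj1 (vnorm_laplacian x lap Hp) Hlap), Gu_radial, HCt by lra.
    split; [|exact HCt0].
    apply drift_estimate; try lra.
    + apply radial_le_of_norm_lt, (Hgrad x); [lra|]. apply is_grad_of_partials, HgT.
    + apply Phi_nu_radial; auto.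
    + fold K. lra.
Qed.
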